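(* Let $\epsilon\in(0,1)$, $u_0\in\mathbb{R}$, $h>0$, and let $(u_n)_{n\ge0}$ be a sequence of real numbers starting at $u_0$ and satisfying the convex-splitting modified Crank–Nicolson scheme $$\frac{u_n-u_{n-1}}{h}+\frac{1}{\epsilon^2}\left(\frac{u_n+u_{n-1}}{2}\right)\left(\frac{u_n^2+u_{n-1}^2}{2}\right)-\frac{1}{\epsilon^2}u_{n-1}=0,\qquad n\ge1.$$ (i) If $u_0\in\{0,1,-1\}$, then $u_n=\mathrm{sign}(u_0)$ for all $n\ge1$, for any $h>0$ and any $\epsilon$. (ii) If $u_0\notin\{0,1,-1\}$, define $h^*=h^*(u_0,\epsilon)=\frac{4\epsilon^2}{u_0^2+2|u_0|-1}$ if $|u_0|>1$ and $h^*=2\epsilon^2$ if $0<|u_0|<1$. Then $h^*>0$ and for every $h\in(0,h^*]$ the sequence $(u_n)$ is monotone and converges to $\mathrm{sign}(u_0)$ as $n\to\infty$.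
   Context: The scheme discretizes the ODE $u'(t)+\frac{1}{\epsilon^2}(u^3-u)=0$, $u(0)=u_0$. For every $h>0$ each step equation has a unique real solution $u_n$. Here $\mathrm{sign}(0)=0$. *)

From Stdlib Require Import Reals.
Open Scope R_scope.

Definition sign (x : R) : R :=
  if Rlt_dec 0 x then 1 else if Rlt_dec x 0 then -1 else 0.

Definition cs_mcn_step (eps h a b : R) : Prop :=
  (b - a) / h + / eps ^ 2 * ((b + a) / 2) * ((b ^ 2 + a ^ 2) / 2)
    - / eps ^ 2 * a = 0.

Definition cs_mcn_seq (eps h : R) (u : nat -> R) : Prop :=
  forall n : nat, cs_mcn_step eps h (u n) (u (S n)).

Definition hstar (u0 eps : R) : R :=
  if Rlt_dec 1 (Rabs u0) then 4 * eps ^ 2 / (u0 ^ 2 + 2 * Rabs u0 - 1)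
  else 2 * eps ^ 2.

Definition monotone_seq (u : nat -> R) : Prop :=
  Un_growing u \/ Un_decreasing u.

(* With k = h / eps^2 the scheme reads R_k(u_{n-1}, u_n) = 0 for a cubic
   residual R_k(a, b) that is strictly increasing in b, so u_n lies below or
   above a test value c according to the sign of R_k(u_{n-1}, c).  Since
   R_k(a, a) = k a (a^2 - 1) and R_k(a, 1) = (1 - a)(1 - k (a^2 + 2a - 1) / 4),
   the bound h <= h* keeps the orbit between u_0 and 1 and moving towards 1;
   the monotone limit is a root of a (a^2 - 1), hence 1.  The residual is odd,
   which reduces negative data to positive data. *)
From Stdlib Require Import Reals Lra Psatz FunctionalExtensionality.
Open Scope R_scope.

Lemma Un_cv_const (c : R) : Un_cv (fun _ => c) c.
Proof.
  intros e He; exists 0%nat; intros n _.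
  unfold Rdist; rewrite Rminus_diag, Rabs_R0; exact He.
Qed.

Lemma Un_cv_scale (u : nat -> R) (c l : R) :
  Un_cv u l -> Un_cv (fun n => c * u n) (c * l).
Proof. exact (CV_mult _ _ _ _ (Un_cv_const c)). Qed.

Lemma monotone_seq_scale (u : nat -> R) (c : R) :
  monotone_seq u -> monotone_seq (fun n => c * u n).
Proof.
  intros [Hu | Hu]; destruct (Rle_or_lt 0 c) as [Hc | Hc];
    [left | right | right | left]; intro n; specialize (Hu n); nra.
Qed.

Lemma monotone_cv_unscale (u : nat -> R) (s l : R) :
  s ^ 2 = 1 ->
  monotone_seq (fun n => s * u n) /\ Un_cv (fun n => s * u n) l ->
  monotone_seq u /\ Un_cv u (s * l).
Proof.
  intros Hs [Hm Hc].
  replace u with (fun n => s * (s * u n))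
    by (extensionality n; transitivity (s ^ 2 * u n); [ring | rewrite Hs; ring]).
  split; [apply monotone_seq_scale, Hm | apply Un_cv_scale, Hc].
Qed.

Lemma pow2_gt_0 (x : R) : x <> 0 -> 0 < x ^ 2.
Proof. intro Hx; rewrite <- Rsqr_pow2; apply Rsqr_pos_lt, Hx. Qed.

Lemma Rabs_neq_1 (x : R) : x <> 1 -> x <> -1 -> Rabs x <> 1.
Proof.
  intros H1 Hm1 Habs; destruct (Rcase_abs x) as [Hx | Hx];
    [rewrite Rabs_left in Habs by exact Hx | rewrite Rabs_right in Habs by exact Hx];
    [apply Hm1 | apply H1]; lra.
Qed.

Lemma sign_eq_self (x : R) : x = 0 \/ x = 1 \/ x = -1 -> sign x = x.
Proof.
  unfold sign; intros [-> | [-> | ->]];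
    repeat destruct Rlt_dec; lra.
Qed.

Lemma sign_mul_self (x : R) : sign x * x = Rabs x.
Proof.
  unfold sign; destruct (Rcase_abs x) as [Hx | Hx];
    [rewrite Rabs_left by exact Hx | rewrite Rabs_right by exact Hx];
    repeat destruct Rlt_dec; lra.
Qed.

Lemma sign_sqr (x : R) : x <> 0 -> sign x ^ 2 = 1.
Proof. unfold sign; intro Hx; repeat destruct Rlt_dec; lra. Qed.

Section Residual.

Variable k : R.
Hypothesis k_pos : 0 < k.

Definition residual (a b : R) : R :=
  b - a + k / 4 * (b + a) * (b ^ 2 + a ^ 2) - k * a.

Lemma residual_sub (a b c : R) :
  residual a b - residual a c =
  (b - c) * (1 + k / 8 * ((a + b) ^ 2 + (b + c) ^ 2 + (c + a) ^ 2)).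
Proof. unfold residual; field. Qed.

Lemma residual_lt_incr (a b c : R) : b < c -> residual a b < residual a c.
Proof.
  intro Hbc.
  assert (Hfac : 0 < 1 + k / 8 * ((a + b) ^ 2 + (b + c) ^ 2 + (c + a) ^ 2)).
  { assert (0 <= k / 8 * ((a + b) ^ 2 + (b + c) ^ 2 + (c + a) ^ 2)); [|lra].
    apply Rmult_le_pos; [lra|].
    pose proof (pow2_ge_0 (a + b)); pose proof (pow2_ge_0 (b + c));
      pose proof (pow2_ge_0 (c + a)); lra. }
  pose proof (residual_sub a b c); nra.
Qed.

Lemma residual_le_incr (a b c : R) : b <= c -> residual a b <= residual a c.
Proof.
  intro Hbc; destruct (Rle_lt_or_eq_dec _ _ Hbc) as [Hlt | ->];
    [apply Rlt_le, residual_lt_incr, Hlt | apply Rle_refl].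
Qed.

Lemma residual_root_lt (a b c : R) :
  residual a b = 0 -> (b < c <-> 0 < residual a c).
Proof.
  intro Hb; rewrite <- Hb; split; [apply residual_lt_incr|].
  intro H; destruct (Rlt_or_le b c) as [Hlt | Hcb]; [exact Hlt|].
  pose proof (residual_le_incr a _ _ Hcb); lra.
Qed.

Lemma residual_root_gt (a b c : R) :
  residual a b = 0 -> (c < b <-> residual a c < 0).
Proof.
  intro Hb; rewrite <- Hb; split; [apply residual_lt_incr|].
  intro H; destruct (Rlt_or_le c b) as [Hlt | Hbc]; [exact Hlt|].
  pose proof (residual_le_incr a _ _ Hbc); lra.
Qed.

Lemma residual_root_le (a b c : R) :
  residual a b = 0 -> (b <= c <-> 0 <= residual a c).
Proof.
  intro Hb; rewrite <- Hb; split; [apply residual_le_incr|].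
  intro H; destruct (Rle_or_lt b c) as [Hle | Hcb]; [exact Hle|].
  pose proof (residual_lt_incr a _ _ Hcb); lra.
Qed.

Lemma residual_root_ge (a b c : R) :
  residual a b = 0 -> (c <= b <-> residual a c <= 0).
Proof.
  intro Hb; rewrite <- Hb; split; [apply residual_le_incr|].
  intro H; destruct (Rle_or_lt c b) as [Hle | Hbc]; [exact Hle|].
  pose proof (residual_lt_incr a _ _ Hbc); lra.
Qed.

Lemma residual_root_unique (a b c : R) :
  residual a b = 0 -> residual a c = 0 -> b = c.
Proof.
  intros Hb Hc; apply Rle_antisym.
  - apply (residual_root_le a b c Hb); lra.
  - apply (residual_root_ge a b c Hb); lra.
Qed.

Lemma residual_diag (a : R) : residual a a = k * a * (a ^ 2 - 1).
Proof. unfold residual; field. Qed.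

Lemma residual_one (a : R) :
  residual a 1 = (1 - a) * (1 - k / 4 * (a ^ 2 + 2 * a - 1)).
Proof. unfold residual; field. Qed.

Lemma residual_scale (s a b : R) :
  s ^ 2 = 1 -> residual (s * a) (s * b) = s * residual a b.
Proof.
  intro Hs.
  assert (E : residual (s * a) (s * b) - s * residual a b
              = k / 4 * (b + a) * (b ^ 2 + a ^ 2) * s * (s ^ 2 - 1))
    by (unfold residual; ring).
  rewrite Hs, Rminus_diag, Rmult_0_r in E; lra.
Qed.

Definition residual_orbit (u : nat -> R) : Prop :=
  forall n, residual (u n) (u (S n)) = 0.

Lemma residual_orbit_scale (s : R) (u : nat -> R) :
  s ^ 2 = 1 -> residual_orbit u -> residual_orbit (fun n => s * u n).
Proof. intros Hs Hu n; rewrite residual_scale, Hu by exact Hs; ring. Qed.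

Lemma residual_orbit_fixed (u : nat -> R) :
  residual_orbit u -> u 0%nat = 0 \/ u 0%nat = 1 \/ u 0%nat = -1 ->
  forall n, u n = u 0%nat.
Proof.
  intros Hu Hu0; induction n as [|n IH]; [reflexivity|].
  rewrite <- IH; symmetry; apply (residual_root_unique (u n)); [|exact (Hu n)].
  rewrite residual_diag, IH; destruct Hu0 as [-> | [-> | ->]]; ring.
Qed.

Lemma residual_step_below_one (a b : R) :
  k <= 2 -> 0 < a < 1 -> residual a b = 0 -> a < b < 1.
Proof.
  intros Hk Ha Hb; split.
  - apply (residual_root_gt a b a Hb); rewrite residual_diag.
    assert (0 < k * a) by nra; assert (a ^ 2 < 1) by nra; nra.
  - apply (residual_root_lt a b 1 Hb); rewrite residual_one.
    assert (k / 4 * (a ^ 2 + 2 * a - 1) < 1); [|nra].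
    destruct (Rle_or_lt (a ^ 2 + 2 * a - 1) 0); [nra|].
    assert (a ^ 2 + 2 * a - 1 < 2) by nra; nra.
Qed.

Lemma residual_step_above_one (c a b : R) :
  k * (c ^ 2 + 2 * c - 1) <= 4 -> 1 <= a <= c -> residual a b = 0 ->
  1 <= b <= a.
Proof.
  intros Hk Ha Hb; split.
  - apply (residual_root_ge a b 1 Hb); rewrite residual_one.
    assert (a ^ 2 + 2 * a - 1 <= c ^ 2 + 2 * c - 1) by nra.
    assert (k / 4 * (a ^ 2 + 2 * a - 1) <= 1) by nra; nra.
  - apply (residual_root_le a b a Hb); rewrite residual_diag.
    assert (0 <= k * a) by nra; assert (1 <= a ^ 2) by nra; nra.
Qed.

Lemma residual_orbit_limit_above (u : nat -> R) (L : R) :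
  residual_orbit u -> Un_cv u L -> (forall n, u n <= L) -> 0 <= residual L L.
Proof.
  intros Hu HL Hle.
  assert (Hcv : Un_cv (fun n => residual (u n) L) (residual L L))
    by (apply (continuity_seq (fun a => residual a L)); [unfold residual; reg | exact HL]).
  apply (Rle_cv_lim (Un := fun _ => 0) (Vn := fun n => residual (u n) L));
    [|apply Un_cv_const | exact Hcv].
  intro n; apply (residual_root_le (u n) (u (S n)) L (Hu n)), Hle.
Qed.

Lemma residual_orbit_limit_below (u : nat -> R) (L : R) :
  residual_orbit u -> Un_cv u L -> (forall n, L <= u n) -> residual L L <= 0.
Proof.
  intros Hu HL Hge.
  assert (Hcv : Un_cv (fun n => residual (u n) L) (residual L L))
    by (apply (continuity_seq (fun a => residual a L)); [unfold residual; reg | exact HL]).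
  apply (Rle_cv_lim (Un := fun n => residual (u n) L) (Vn := fun _ => 0));
    [|exact Hcv | apply Un_cv_const].
  intro n; apply (residual_root_ge (u n) (u (S n)) L (Hu n)), Hge.
Qed.

Lemma residual_orbit_cv_from_below (u : nat -> R) :
  k <= 2 -> 0 < u 0%nat < 1 -> residual_orbit u -> Un_growing u /\ Un_cv u 1.
Proof.
  intros Hk Hu0 Hu.
  assert (Hbnd : forall n, 0 < u n < 1).
  { induction n as [|n IH]; [exact Hu0|].
    pose proof (residual_step_below_one _ _ Hk IH (Hu n)); lra. }
  assert (Hgrow : Un_growing u).
  { intro n; pose proof (residual_step_below_one _ _ Hk (Hbnd n) (Hu n)); lra. }
  split; [exact Hgrow|].
  destruct (growing_cv u Hgrow) as [L HL].
  { exists 1; intros x [n ->]; pose proof (Hbnd n); lra. }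
  assert (Hle1 : L <= 1).
  { apply (Rle_cv_lim (Vn := fun _ => 1) (fun n => Rlt_le _ _ (proj2 (Hbnd n))) HL).
    apply Un_cv_const. }
  pose proof (growing_ineq u L Hgrow HL) as HuL.
  pose proof (residual_orbit_limit_above u L Hu HL HuL) as Hfix.
  rewrite residual_diag in Hfix.
  replace 1 with L; [exact HL|].
  pose proof (HuL 0%nat); assert (0 < k * L) by nra.
  assert (1 <= L ^ 2) by nra; nra.
Qed.

Lemma residual_orbit_cv_from_above (u : nat -> R) :
  k * (u 0%nat ^ 2 + 2 * u 0%nat - 1) <= 4 -> 1 < u 0%nat -> residual_orbit u ->
  Un_decreasing u /\ Un_cv u 1.
Proof.
  intros Hk Hu0 Hu.
  assert (Hbnd : forall n, 1 <= u n <= u 0%nat).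
  { induction n as [|n IH]; [lra|].
    pose proof (residual_step_above_one _ _ _ Hk IH (Hu n)); lra. }
  assert (Hdecr : Un_decreasing u).
  { intro n; pose proof (residual_step_above_one _ _ _ Hk (Hbnd n) (Hu n)); lra. }
  split; [exact Hdecr|].
  destruct (decreasing_cv u Hdecr) as [L HL].
  { exists 0; intros x [n ->]; unfold opp_seq; pose proof (Hbnd n); lra. }
  assert (Hge1 : 1 <= L).
  { apply (Rle_cv_lim (Un := fun _ => 1) (fun n => proj1 (Hbnd n))); [|exact HL].
    apply Un_cv_const. }
  pose proof (residual_orbit_limit_below u L Hu HL (decreasing_ineq u L Hdecr HL)) as Hfix.
  rewrite residual_diag in Hfix.
  replace 1 with L; [exact HL|].
  assert (0 < k * L) by nra; assert (L ^ 2 - 1 <= 0) by nra; nra.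
Qed.

Lemma residual_orbit_cv_one (u : nat -> R) :
  0 < u 0%nat -> u 0%nat <> 1 ->
  (u 0%nat < 1 -> k <= 2) ->
  (1 < u 0%nat -> k * (u 0%nat ^ 2 + 2 * u 0%nat - 1) <= 4) ->
  residual_orbit u -> monotone_seq u /\ Un_cv u 1.
Proof.
  intros Hpos Hne1 Hsmall Hlarge Hu.
  destruct (Rlt_or_le (u 0%nat) 1) as [Hlt | Hge].
  - destruct (residual_orbit_cv_from_below u) as [Hm Hc]; auto.
    split; [left|]; assumption.
  - assert (H1 : 1 < u 0%nat) by lra.
    destruct (residual_orbit_cv_from_above u) as [Hm Hc]; auto.
    split; [right|]; assumption.
Qed.

End Residual.

Lemma cs_mcn_seq_residual_orbit (eps h : R) (u : nat -> R) :
  eps <> 0 -> h <> 0 -> cs_mcn_seq eps h u -> residual_orbit (h / eps ^ 2) u.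
Proof.
  intros Heps Hh Hu n; specialize (Hu n); unfold cs_mcn_step in Hu; unfold residual.
  rewrite <- (Rmult_0_r h), <- Hu; field; split; [exact Heps | exact Hh].
Qed.

Lemma hstar_pos (u0 eps : R) : eps <> 0 -> 0 < hstar u0 eps.
Proof.
  intro Heps; pose proof (pow2_gt_0 eps Heps) as He2; unfold hstar.
  destruct (Rlt_dec 1 (Rabs u0)) as [Hu0 | _]; [|lra].
  apply Rdiv_lt_0_compat; [lra|]; rewrite <- pow2_abs; nra.
Qed.

Lemma hstar_bound_small (u0 eps h : R) :
  eps <> 0 -> Rabs u0 <= 1 -> h <= hstar u0 eps -> h / eps ^ 2 <= 2.
Proof.
  intros Heps Hu0 Hh; pose proof (pow2_gt_0 eps Heps) as He2.
  unfold hstar in Hh; destruct (Rlt_dec 1 (Rabs u0)); [lra|].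
  replace 2 with (2 * eps ^ 2 / eps ^ 2) by (field; exact Heps).
  apply Rmult_le_compat_r; [apply Rlt_le, Rinv_0_lt_compat, He2 | exact Hh].
Qed.

Lemma hstar_bound_large (u0 eps h : R) :
  eps <> 0 -> 1 < Rabs u0 -> h <= hstar u0 eps ->
  h / eps ^ 2 * (Rabs u0 ^ 2 + 2 * Rabs u0 - 1) <= 4.
Proof.
  intros Heps Hu0 Hh; pose proof (pow2_gt_0 eps Heps) as He2.
  unfold hstar in Hh; destruct (Rlt_dec 1 (Rabs u0)); [|lra].
  rewrite <- (pow2_abs u0) in Hh.
  set (D := Rabs u0 ^ 2 + 2 * Rabs u0 - 1) in *.
  assert (HD : 0 < D) by (unfold D; nra).
  replace 4 with (4 * eps ^ 2 / D / eps ^ 2 * D) by (field; lra).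
  apply Rmult_le_compat_r; [lra|].
  apply Rmult_le_compat_r; [apply Rlt_le, Rinv_0_lt_compat, He2 | exact Hh].
Qed.

Theorem theorem3p10 (eps u0 : R) :
  0 < eps < 1 ->
  ((u0 = 0 \/ u0 = 1 \/ u0 = -1) ->
     forall (h : R) (u : nat -> R), 0 < h -> u 0%nat = u0 ->
       cs_mcn_seq eps h u -> forall n : nat, (1 <= n)%nat -> u n = sign u0)
  /\
  (~ (u0 = 0 \/ u0 = 1 \/ u0 = -1) ->
     0 < hstar u0 eps /\
     forall (h : R) (u : nat -> R), 0 < h <= hstar u0 eps -> u 0%nat = u0 ->
       cs_mcn_seq eps h u ->
       monotone_seq u /\ Un_cv u (sign u0)).
Proof.
  intros [Heps _]; assert (Heps0 : eps <> 0) by lra.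
  assert (Hk : forall h, 0 < h -> 0 < h / eps ^ 2)
    by (intros h Hh; apply Rdiv_lt_0_compat; [exact Hh | apply pow2_gt_0, Heps0]).
  assert (Horbit : forall h u, 0 < h -> cs_mcn_seq eps h u -> residual_orbit (h / eps ^ 2) u)
    by (intros h u Hh; apply cs_mcn_seq_residual_orbit; [exact Heps0 | exact (Rgt_not_eq _ _ Hh)]).
  split.
  - intros Hu0 h u Hh Hinit Hseq n _.
    rewrite sign_eq_self, <- Hinit by exact Hu0.
    apply (residual_orbit_fixed _ (Hk h Hh)); [exact (Horbit h u Hh Hseq) | now rewrite Hinit].
  - intros Hu0; split; [exact (hstar_pos u0 eps Heps0)|].
    intros h u [Hh Hhstar] Hinit Hseq.
    assert (Hs : sign u0 ^ 2 = 1) by (apply sign_sqr; tauto).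
    rewrite <- (Rmult_1_r (sign u0)); apply (monotone_cv_unscale u _ _ Hs).
    apply (residual_orbit_cv_one _ (Hk h Hh)); cbv beta; rewrite ?Hinit, ?sign_mul_self.
    + apply Rabs_pos_lt; tauto.
    + apply Rabs_neq_1; tauto.
    + intro Hsmall; exact (hstar_bound_small u0 eps h Heps0 (Rlt_le _ _ Hsmall) Hhstar).
    + intro Hlarge; exact (hstar_bound_large u0 eps h Heps0 Hlarge Hhstar).
    + exact (residual_orbit_scale _ _ _ Hs (Horbit h u Hh Hseq)).
Qed.
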